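(* Let $Y=(Y_1,\dots,Y_m)$ be obtained by applying dependent rounding with a fixed tournament tree (as in the context) to $y^*$, and let $C=\{F_i: Y_i=1\}$ (a set of exactly $k$ facilities). Then for every client $D_j$, $j\in[n]$, $$\mathbb{E}\Big[\sum_{i=1}^k \tfrac{1}{i}\,c^{\rightarrow}_i(C,j)\Big]\;\le\;2.3589\cdot \mathrm{OPT}^{LP}_j,\qquad\text{where } \mathrm{OPT}^{LP}_j=\sum_{\ell=1}^k\sum_{i=1}^m \tfrac1\ell\, x^{*\ell}_{ij}c_{ij}.$$
   Context: Instance: clients $D_1,\dots,D_n$, facilities $F_1,\dots,F_m$, nonnegative costs $c_{i,j}$, integer $k\le m$. For a $k$-set $C$ of facilities, $c^{\rightarrow}_1(C,j)\le\dots\le c^{\rightarrow}_k(C,j)$ are the costs $\{c_{i,j}:F_i\in C\}$ sorted non-decreasingly. Linear program: minimize $\sum_{j=1}^n\sum_{\ell=1}^k\sum_{i=1}^m \frac1\ell x^\ell_{ij}c_{ij}$ subject to $\sum_{i=1}^m y_i=k$; $\sum_{\ell=1}^k x^\ell_{ij}\le y_i$ for all $i,j$; $\sum_{i=1}^m x^\ell_{ij}\ge 1$ for all $j\in[n],\ell\in[k]$; $y_i,x^\ell_{ij}\in[0,1]$. Let $(x^*,y^* )$ be an optimal solution. Dependent rounding with a fixed tournament tree: fix a rooted binary tree with $m$ leaves, leaf $i$ holding variable $y_i$ initialized to $y^*_i$; repeatedly take two nonempty sibling nodes whose parent is empty. If both hold fractional variables $y_a,y_b$ with $s=y_a+y_b$: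 if $s\le1$, with probability $y_a/s$ set $(y_a,y_b)\leftarrow(s,0)$, else $(0,s)$; if $s>1$, with probability $(1-y_b)/(2-s)$ set $(y_a,y_b)\leftarrow(1,s-1)$, else $(s-1,1)$. A still-fractional variable is promoted to the parent; if both became integral a dummy $\bot$ is promoted; if one node holds $\bot$ (or an integral variable) the other node's content is promoted unchanged. $Y_i$ is the final (0/1) value of $y_i$. *)

From HB Require Import structures.
From mathcomp Require Import all_boot all_order all_algebra.
From mathcomp Require Import reals.
Set Implicit Arguments. Unset Strict Implicit. Unset Printing Implicit Defensive.
Import Order.TTheory GRing.Theory Num.Theory.
Local Open Scope ring_scope.

Section Defs.
Variable R : realType.

(* x l i j stands for x^{l+1}_{ij}  (l : 'I_k is 0-based), y i for y_i. *)
Definition lp_obj_j (n m k : nat) (c : 'I_m -> 'I_n -> R)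
  (x : 'I_k -> 'I_m -> 'I_n -> R) (j : 'I_n) : R :=
  \sum_(l < k) \sum_(i < m) (l.+1%:R)^-1 * x l i j * c i j.

Definition lp_obj (n m k : nat) (c : 'I_m -> 'I_n -> R)
  (x : 'I_k -> 'I_m -> 'I_n -> R) : R :=
  \sum_(j < n) lp_obj_j c x j.

Definition lp_feasible (n m k : nat)
  (x : 'I_k -> 'I_m -> 'I_n -> R) (y : 'I_m -> R) : Prop :=
  [/\ \sum_(i < m) y i = k%:R,
      (forall i j, \sum_(l < k) x l i j <= y i),
      (forall j l, 1 <= \sum_(i < m) x l i j),
      (forall i, 0 <= y i <= 1) &
      (forall l i j, 0 <= x l i j <= 1)].

Definition lp_optimal (n m k : nat) (c : 'I_m -> 'I_n -> R)
  (x : 'I_k -> 'I_m -> 'I_n -> R) (y : 'I_m -> R) : Prop :=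
  lp_feasible x y /\
  forall (x' : 'I_k -> 'I_m -> 'I_n -> R) (y' : 'I_m -> R), lp_feasible x' y' -> lp_obj c x <= lp_obj c x'.

Inductive ttree (m : nat) : Type :=
| Leaf of 'I_m
| Node of ttree m & ttree m.

Fixpoint leaves (m : nat) (t : ttree m) : seq 'I_m :=
  match t with
  | Leaf i => [:: i]
  | Node l r => leaves l ++ leaves r
  end.

Definition tree_ok (m : nat) (t : ttree m) : Prop :=
  perm_eq (leaves t) (enum 'I_m).

Definition fracb (v : R) : bool := (0 < v) && (v < 1).

Definition upd (m : nat) (y : 'I_m -> R) (i : 'I_m) (v : R) : 'I_m -> R :=
  fun i' => if i' == i then v else y i'.

(* An outcome: current values of all variables, and the content of the
   node (Some i = fractional variable y_i, None = dummy bot / integral). *)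
Definition outcome (m : nat) := (('I_m -> R) * option 'I_m)%type.
(* A finitely supported distribution: list of (probability, outcome). *)
Definition dist (m : nat) := seq (R * outcome m).

Definition content (m : nat) (y : 'I_m -> R) (i : 'I_m) : option 'I_m :=
  if fracb (y i) then Some i else None.

(* one pairing step at a node whose two children hold a and b *)
Definition combine (m : nat) (y : 'I_m -> R) (a b : option 'I_m) : dist m :=
  match a, b with
  | Some ia, Some ib =>
      let ya := y ia in let yb := y ib in let s := ya + yb in
      if s <= 1 then
        let y1 := upd (upd y ia s) ib 0 in
        let y2 := upd (upd y ia 0) ib s in
        [:: (ya / s, (y1, if fracb s then Some ia else None));
            (1 - ya / s, (y2, if fracb s then Some ib else None))]
      else
        let p := (1 - yb) / (2 - s) in
        let y1 := upd (upd y ia 1) ib (s - 1) in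
        let y2 := upd (upd y ia (s - 1)) ib 1 in
        [:: (p, (y1, content y1 ib));
            (1 - p, (y2, content y2 ia))]
  | Some ia, None => [:: (1, (y, Some ia))]
  | None, ob => [:: (1, (y, ob))]
  end.

(* distribution of outcomes of processing a subtree (its variables are
   disjoint from the others, so subtrees are processed independently) *)
Fixpoint round (m : nat) (t : ttree m) (y : 'I_m -> R) : dist m :=
  match t with
  | Leaf i => [:: (1, (y, content y i))]
  | Node l r =>
      flatten [seq
        flatten [seq
          [seq (p * q * s, o) | '(s, o) <- combine y2 a b]
        | '(q, (y2, b)) <- round r y1]
      | '(p, (y1, a)) <- round l y]
  end.

Definition rounding_expect (m : nat) (t : ttree m) (ystar : 'I_m -> R)
  (f : ('I_m -> R) -> R) : R :=
  \sum_(o <- round t ystar) o.1 * f o.2.1.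

Definition chosen (m : nat) (Y : 'I_m -> R) : {set 'I_m} := [set i | Y i == 1].

Definition sorted_costs (n m : nat) (c : 'I_m -> 'I_n -> R) (C : {set 'I_m})
  (j : 'I_n) : seq R := sort <=%R [seq c i j | i <- enum C].

Definition ordered_cost (n m k : nat) (c : 'I_m -> 'I_n -> R)
  (C : {set 'I_m}) (j : 'I_n) : R :=
  \sum_(l < k) (l.+1%:R)^-1 * nth 0 (sorted_costs c C j) l.

End Defs.

From HB Require Import structures.
From mathcomp Require Import all_boot all_order all_algebra.
From mathcomp Require Import reals ring lra.
From Stdlib Require List.
Set Implicit Arguments. Unset Strict Implicit. Unset Printing Implicit Defensive.
Import Order.TTheory GRing.Theory Num.Theory.
Local Open Scope ring_scope.

(* Each pairing step of the rounding splits (y_a, y_b) into two branches on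
   the line y_a + y_b = const whose average is (y_a, y_b) and in which the
   product y_a y_b does not increase.  Hence along the whole tree every
   marginal E[Y_i] = y*_i is preserved and E[Y_u Y_v] <= y*_u y*_v for u <> v;
   moreover the final Y is a k-set, since a single fractional variable cannot
   survive in an integral total.

   For any such negatively correlated distribution on k-sets the bound holds
   with factor 2.  Writing the cost vector as a nonnegative combination of
   nested 0/1 threshold vectors, the ordered cost is additive over the layers,
   and so is the LP value; so let e be a 0/1 vector.  If z facilities of C
   have e = 0, the ordered cost of e is H_k - H_z.  It lies below a quadratic
   in z that touches it at a = ceil(E z), whose mean is controlled by
   Var z <= min(E z, k - E z); and weak LP duality gives the LP value of e at
   least (H_k - H_a) + (a - E z)/a. *)

Lemma Forall_cat (T : Type) (P : T -> Prop) (s1 s2 : seq T) :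
  List.Forall P s1 -> List.Forall P s2 -> List.Forall P (s1 ++ s2).
Proof. by move=> + P2; elim=> //= x xs Px _ IH; constructor. Qed.

Lemma Forall_map (T U : Type) (P : T -> Prop) (Q : U -> Prop) (f : T -> U) (s : seq T) :
  List.Forall P s -> (forall x, P x -> Q (f x)) -> List.Forall Q (map f s).
Proof. by move=> + fPQ; elim=> //= x xs Px _ IH; constructor; first exact: fPQ. Qed.

Lemma Forall_flatten_map (T U : Type) (P : T -> Prop) (Q : U -> Prop) (f : T -> seq U) (s : seq T) :
  List.Forall P s -> (forall x, P x -> List.Forall Q (f x)) ->
  List.Forall Q (flatten (map f s)).
Proof.
move=> + fPQ; elim=> // x xs Px _ IH.
rewrite map_cons -cat1s flatten_cat /= cats0.
by apply: Forall_cat; first exact: fPQ.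
Qed.

Lemma ler_sum_Forall (T : Type) (R : numDomainType) (P : T -> Prop) (s : seq T) (F G : T -> R) :
  List.Forall P s -> (forall x, P x -> F x <= G x) ->
  \sum_(x <- s) F x <= \sum_(x <- s) G x.
Proof.
move=> + FG; elim=> [|x xs Px _ IH]; first by rewrite !big_nil.
by rewrite !big_cons lerD ?FG.
Qed.

Lemma eq_sum_Forall (T : Type) (R : nmodType) (P : T -> Prop) (s : seq T) (F G : T -> R) :
  List.Forall P s -> (forall x, P x -> F x = G x) ->
  \sum_(x <- s) F x = \sum_(x <- s) G x.
Proof.
move=> + FG; elim=> [|x xs Px _ IH]; first by rewrite !big_nil.
by rewrite !big_cons FG ?IH.
Qed.

Section Expectation.
Variables (R : realType) (m : nat).
Implicit Types (d : dist R m) (F G : ('I_m -> R) -> R).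

Definition expect d F : R := \sum_(o <- d) o.1 * F o.2.1.

Lemma eq_expectr d F G : F =1 G -> expect d F = expect d G.
Proof. by move=> FG; apply: eq_bigr => o _; rewrite FG. Qed.

Lemma expect_flatten (T : Type) (f : T -> dist R m) (s : seq T) F :
  expect (flatten (map f s)) F = \sum_(x <- s) expect (f x) F.
Proof. by rewrite /expect big_flatten big_map. Qed.

Lemma expect_scale (c : R) d F :
  expect [seq (c * w, o) | '(w, o) <- d] F = c * expect d F.
Proof. by rewrite /expect big_map mulr_sumr; apply: eq_bigr => -[w o] _; rewrite mulrA. Qed.

Lemma expect1 y (c : option 'I_m) F : expect [:: (1, (y, c))] F = F y.
Proof. by rewrite /expect big_seq1 mul1r. Qed.

Lemma expect2 (p : R) y1 y2 (c1 c2 : option 'I_m) F :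
  expect [:: (p, (y1, c1)); (1 - p, (y2, c2))] F = p * F y1 + (1 - p) * F y2.
Proof. by rewrite /expect !big_cons big_nil addr0. Qed.

Lemma expectD d F G : expect d (fun Y => F Y + G Y) = expect d F + expect d G.
Proof. by rewrite /expect -big_split; apply: eq_bigr => o _; rewrite mulrDr. Qed.

Lemma expectZ (c : R) d F : expect d (fun Y => c * F Y) = c * expect d F.
Proof. by rewrite /expect mulr_sumr; apply: eq_bigr => o _; rewrite mulrCA. Qed.

Lemma expectN d F : expect d (fun Y => - F Y) = - expect d F.
Proof. by rewrite /expect -sumrN; apply: eq_bigr => o _; rewrite mulrN. Qed.

Lemma expect_sum (I : finType) (P : pred I) d (F : I -> ('I_m -> R) -> R) :
  expect d (fun Y => \sum_(i | P i) F i Y) = \sum_(i | P i) expect d (F i).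
Proof.
rewrite /expect -exchange_big /=; apply: eq_bigr => o _; exact: mulr_sumr.
Qed.

Lemma expect_cst (c : R) d : expect d (fun=> c) = c * \sum_(o <- d) o.1.
Proof. by rewrite /expect mulr_sumr; apply: eq_bigr => o _; rewrite mulrC. Qed.

Lemma ler_expect (P : ('I_m -> R) -> Prop) d F G :
  List.Forall (fun o => 0 <= o.1 /\ P o.2.1) d ->
  (forall Y, P Y -> F Y <= G Y) -> expect d F <= expect d G.
Proof. by move=> dP FG; apply: (ler_sum_Forall dP) => o [w0 /FG]; apply: ler_wpM2l. Qed.

Lemma eq_expect (P : ('I_m -> R) -> Prop) d F G :
  List.Forall (fun o => P o.2.1) d ->
  (forall Y, P Y -> F Y = G Y) -> expect d F = expect d G.
Proof. by move=> dP FG; apply: (eq_sum_Forall dP) => o /FG ->. Qed.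

End Expectation.

Section RoundingStep.
Variables (R : realType) (m : nat).
Implicit Types (y : 'I_m -> R) (ia ib : 'I_m) (A B : R).

Definition in_unit_cube y := forall i, 0 <= y i <= 1.

Definition integral (v : R) := (v == 0) || (v == 1).

Lemma integral_itv (v : R) : integral v -> 0 <= v <= 1.
Proof. by case/orP=> /eqP->; rewrite lexx ler01. Qed.

Lemma fracb_itv (v : R) : fracb v -> 0 <= v <= 1.
Proof. by case/andP=> v0 v1; rewrite !ltW. Qed.

Lemma integral_notfrac (v : R) : 0 <= v <= 1 -> ~~ fracb v -> integral v.
Proof.
case/andP=> v0 v1; rewrite /fracb negb_and -!leNgt /integral.
by case/orP=> h; apply/orP; [left | right]; rewrite eq_le h ?v0 ?v1.
Qed.

Lemma upd2_at_ia y ia ib A B : ia != ib -> upd (upd y ia A) ib B ia = A.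
Proof. by move=> /negbTE nab; rewrite /upd nab eqxx. Qed.

Lemma upd2_at_ib y ia ib A B : upd (upd y ia A) ib B ib = B.
Proof. by rewrite /upd eqxx. Qed.

Lemma upd2_other y ia ib A B i :
  i != ia -> i != ib -> upd (upd y ia A) ib B i = y i.
Proof. by move=> /negbTE nia /negbTE nib; rewrite /upd nia nib. Qed.

Lemma sum_upd y i (v : R) : \sum_j upd y i v j = \sum_j y j - y i + v.
Proof.
rewrite (bigD1 i) // [in RHS](bigD1 i) //= {1}/upd eqxx.
rewrite (eq_bigr y) => [|j /negbTE nji]; first by rewrite addrC [y i + _]addrC addrK.
by rewrite /upd nji.
Qed.

(* One branch of the pairing step: the pair (y_a, y_b) becomes (A, B), and
   [c] is the variable left fractional, if any. *)
Definition rounded_pair ia ib (ya yb A B : R) (c : option 'I_m) :=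
  [/\ A + B = ya + yb, A * B <= ya * yb &
      [\/ c = None /\ integral A && integral B,
          c = Some ia /\ fracb A && integral B |
          c = Some ib /\ integral A && fracb B]].

Lemma rounded_pair_merge ia ib (ya yb : R) : 0 < ya -> 0 < yb -> ya + yb <= 1 ->
  rounded_pair ia ib ya yb (ya + yb) 0 (if fracb (ya + yb) then Some ia else None) /\
  rounded_pair ia ib ya yb 0 (ya + yb) (if fracb (ya + yb) then Some ib else None).
Proof.
move=> ya0 yb0 s1.
have int0 : integral (0 : R) by rewrite /integral eqxx.
have prod0 : 0 <= ya * yb by rewrite mulr_ge0 ?ltW.
rewrite /rounded_pair !mulr0 !mul0r !addr0 !add0r.
case: ifP => sfrac.
  by split; split => //; [apply: Or32 | apply: Or33]; rewrite int0.
have sint : integral (ya + yb).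
  by rewrite integral_notfrac ?sfrac // s1 andbT addr_ge0 ?ltW.
by split; split => //; apply: Or31; rewrite sint int0.
Qed.

Lemma rounded_pair_spill ia ib (ya yb : R) : ya < 1 -> yb < 1 -> 1 < ya + yb ->
  rounded_pair ia ib ya yb 1 (ya + yb - 1) (Some ib) /\
  rounded_pair ia ib ya yb (ya + yb - 1) 1 (Some ia).
Proof.
move=> ya1 yb1 s1.
have int1 : integral (1 : R) by rewrite /integral eqxx orbT.
have sfrac : fracb (ya + yb - 1) by apply/andP; split; lra.
have prod_le : ya + yb - 1 <= ya * yb.
  rewrite -subr_ge0 (_ : _ - _ = (1 - ya) * (1 - yb)); last by ring.
  by rewrite mulr_ge0 // subr_ge0 ltW.
rewrite /rounded_pair mul1r mulr1 addrC subrK.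
by split; split => //; [apply: Or33 | apply: Or32]; rewrite sfrac int1.
Qed.

Lemma combine_split y ia ib : ia != ib -> fracb (y ia) -> fracb (y ib) ->
  exists p A B A' B' c c',
  [/\ combine y (Some ia) (Some ib) =
        [:: (p, (upd (upd y ia A) ib B, c)); (1 - p, (upd (upd y ia A') ib B', c'))],
      0 <= p <= 1,
      p * A + (1 - p) * A' = y ia /\ p * B + (1 - p) * B' = y ib &
      rounded_pair ia ib (y ia) (y ib) A B c /\ rounded_pair ia ib (y ia) (y ib) A' B' c'].
Proof.
move=> nab /andP[ya0 ya1] /andP[yb0 yb1]; rewrite /combine.
have s0 : 0 < y ia + y ib by rewrite addr_gt0.
case: ifP => [s1 | /negbT]; last rewrite -ltNge => s1.
  exists (y ia / (y ia + y ib)), (y ia + y ib), 0, 0, (y ia + y ib).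
  do 2 eexists; split; first by [].
  - by apply/andP; split; [rewrite divr_ge0 ?ltW | rewrite ler_pdivrMr // mul1r lerDl ltW].
  - by split; field; rewrite gt_eqF.
  - exact: rounded_pair_merge.
have d0 : 0 < 2 - (y ia + y ib) by lra.
exists ((1 - y ib) / (2 - (y ia + y ib))), 1, (y ia + y ib - 1), (y ia + y ib - 1), 1.
exists (Some ib), (Some ia); split.
- have sfrac : fracb (y ia + y ib - 1) by apply/andP; split; lra.
  by rewrite /content upd2_at_ia // upd2_at_ib sfrac.
- apply/andP; split; first by rewrite divr_ge0 ?ltW // subr_gt0.
  by rewrite ler_pdivrMr // mul1r; lra.
- by split; field; rewrite gt_eqF.
- exact: rounded_pair_spill.
Qed.

End RoundingStep.

Lemma uniq_cat_notin (T : eqType) (l r : seq T) (i : T) :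
  uniq (l ++ r) -> i \in l -> i \notin r.
Proof.
rewrite cat_uniq => /and3P[_ /hasPn lr _] il.
by apply/negP => /lr; rewrite il.
Qed.

Section RoundingInvariant.
Variables (R : realType) (m : nat).
Implicit Types (y : 'I_m -> R) (S : seq 'I_m) (a b c : option 'I_m).

Record step_inv y a b (o : R * outcome R m) : Prop := StepInv {
  step_weight : 0 <= o.1;
  step_in_cube : in_unit_cube o.2.1;
  step_frozen : forall i, a != Some i -> b != Some i -> o.2.1 i = y i;
  step_sum : \sum_i o.2.1 i = \sum_i y i;
  step_content : forall i, o.2.2 = Some i ->
    ((a == Some i) || (b == Some i)) && fracb (o.2.1 i);
  step_integral : forall i, (a == Some i) || (b == Some i) ->
    o.2.2 != Some i -> integral (o.2.1 i) }.

Lemma rounded_pair_step_inv y ia ib (w A B : R) c :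
  in_unit_cube y -> ia != ib -> 0 <= w -> rounded_pair ia ib (y ia) (y ib) A B c ->
  step_inv y (Some ia) (Some ib) (w, (upd (upd y ia A) ib B, c)).
Proof.
move=> vy nab w0 [sumAB _ hc].
have [A01 B01] : 0 <= A <= 1 /\ 0 <= B <= 1.
  by case: hc => -[_ /andP[hA hB]]; split; by [apply: integral_itv | apply: fracb_itv].
have nba : ib != ia by rewrite eq_sym.
constructor => /=.
- exact: w0.
- by move=> i; rewrite /upd; case: ifP => _ //; case: ifP => _ //.
- move=> i nia nib.
  by apply: upd2_other; [apply: contraNneq nia => -> | apply: contraNneq nib => ->].
- by rewrite !sum_upd /upd (negbTE nba); lra.
- case: hc => -[-> /andP[hA hB]] // i [<-];
  by rewrite eqxx ?orbT ?upd2_at_ia ?upd2_at_ib.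
- case: hc => -[-> /andP[hA hB]] i /orP[] /eqP[<-];
  by rewrite ?eqxx ?(negbTE nab) ?(negbTE nba) ?upd2_at_ia ?upd2_at_ib.
Qed.

Lemma combine_step_inv y a b : in_unit_cube y ->
  (forall i, a = Some i -> fracb (y i) /\ b != Some i) ->
  (forall i, b = Some i -> fracb (y i)) ->
  List.Forall (step_inv y a b) (combine y a b).
Proof.
move=> vy; case: a b => [ia|] [ib|] ha hb.
- have [fa nba] := ha ia erefl.
  have nab : ia != ib by apply: contraNneq nba => ->.
  have [p [A [B [A' [B' [c [c' [-> /andP[p0 p1] _ [ok ok']]]]]]]]] :=
    combine_split nab fa (hb ib erefl).
  constructor; first exact: rounded_pair_step_inv.
  by constructor; [apply: rounded_pair_step_inv; rewrite ?subr_ge0 | constructor].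
- constructor; last constructor.
  constructor => //= [i [<-]|]; first by rewrite eqxx; case: (ha ia erefl).
  by move=> i /orP[/eqP <-|//]; rewrite eqxx.
- constructor; last constructor.
  constructor => //= [i [<-]|]; first by rewrite eqxx (hb ib erefl).
  by move=> i /eqP <-; rewrite eqxx.
- by constructor; last constructor; constructor.
Qed.

Record round_inv S y (o : R * outcome R m) : Prop := RoundInv {
  inv_weight : 0 <= o.1;
  inv_in_cube : in_unit_cube o.2.1;
  inv_frozen : forall i, i \notin S -> o.2.1 i = y i;
  inv_sum : \sum_i o.2.1 i = \sum_i y i;
  inv_content : forall i, o.2.2 = Some i -> (i \in S) && fracb (o.2.1 i);
  inv_integral : forall i, i \in S -> o.2.2 != Some i -> integral (o.2.1 i) }.

Lemma round_inv_leaf y i : in_unit_cube y -> round_inv [:: i] y (1, (y, content y i)).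
Proof.
move=> vy; constructor => //= j; rewrite /content mem_seq1.
  by case: ifP => // fi [<-]; rewrite eqxx fi.
move=> /eqP ->; case: ifP => [_|fi _]; first by rewrite eqxx.
exact: integral_notfrac (vy i) (negbT fi).
Qed.

Lemma round_inv_node l r y (p q s : R) y1 y2 a b o :
  uniq (l ++ r) -> round_inv l y (p, (y1, a)) -> round_inv r y1 (q, (y2, b)) ->
  step_inv y2 a b (s, o) -> round_inv (l ++ r) y (p * q * s, o).
Proof.
move=> U [/= p0 _ fr1 sum1 ct1 int1] [/= q0 _ fr2 sum2 ct2 int2].
move=> [/= s0 v3 fr3 sum3 ct3 int3].
have aS i : a = Some i -> i \in l by move/ct1/andP=> [].
have bS i : b = Some i -> i \in r by move/ct2/andP=> [].
constructor => //=.
- by rewrite !mulr_ge0.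
- move=> i; rewrite mem_cat negb_or => /andP[il ir].
  rewrite fr3 ?fr2 ?fr1 //; [apply: contraNneq il; exact: aS | apply: contraNneq ir; exact: bS].
- by rewrite sum3 sum2 sum1.
- move=> i /ct3 /andP[ab fi]; rewrite mem_cat fi andbT.
  by case/orP: ab => /eqP e; [rewrite (aS i e) | rewrite (bS i e) orbT].
- move=> i iS ci; have [ab|/norP[na nb]] := boolP ((a == Some i) || (b == Some i)).
    exact: int3.
  rewrite fr3 //; move: iS; rewrite mem_cat => /orP[il|ir]; last exact: int2.
  by rewrite fr2 ?int1 // (uniq_cat_notin U).
Qed.

Lemma children_pairable l r y (p q : R) y1 y2 a b :
  uniq (l ++ r) -> round_inv l y (p, (y1, a)) -> round_inv r y1 (q, (y2, b)) ->
  (forall i, a = Some i -> fracb (y2 i) /\ b != Some i) /\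
  (forall i, b = Some i -> fracb (y2 i)).
Proof.
move=> U inv1 inv2; split=> [i ai|i bi]; last by case/andP: (inv_content inv2 bi).
have /andP[il fi] := inv_content inv1 ai.
have ir := uniq_cat_notin U il.
split; first by move: (inv_frozen inv2 ir) => /= ->.
by apply/eqP => /(inv_content inv2)/andP[]; rewrite (negbTE ir).
Qed.

Lemma round_invariant t y : uniq (leaves t) -> in_unit_cube y ->
  List.Forall (round_inv (leaves t) y) (round t y).
Proof.
elim: t y => [i|l IHl r IHr] y /=.
  move=> _ vy; constructor; last constructor.
  exact: round_inv_leaf.
move=> U vy; move: (U); rewrite cat_uniq => /and3P[Ul _ Ur].
apply: (Forall_flatten_map (IHl y Ul vy)) => -[p [y1 a]] inv1.
apply: (Forall_flatten_map (IHr y1 Ur (inv_in_cube inv1))) => -[q [y2 b]] inv2.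
have [ha hb] := children_pairable U inv1 inv2.
apply: (Forall_map (combine_step_inv (inv_in_cube inv2) ha hb)) => -[s o].
exact: round_inv_node U inv1 inv2.
Qed.

End RoundingInvariant.

Lemma ler_convex (R : numDomainType) (p a b c : R) :
  0 <= p <= 1 -> a <= c -> b <= c -> p * a + (1 - p) * b <= c.
Proof.
case/andP=> p0 p1 ac bc; apply: le_trans (_ : p * c + (1 - p) * c <= c).
  by rewrite lerD // ler_wpM2l // subr_ge0.
by rewrite -mulrDl addrC subrK mul1r.
Qed.

Section RoundingMoments.
Variables (R : realType) (m : nat).
Implicit Types (y : 'I_m -> R) (F : ('I_m -> R) -> R).

Lemma combine_moments y ia ib : ia != ib -> fracb (y ia) -> fracb (y ib) ->
  exists p Y1 Y2 c1 c2,
  [/\ combine y (Some ia) (Some ib) = [:: (p, (Y1, c1)); (1 - p, (Y2, c2))],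
      0 <= p <= 1,
      forall i, p * Y1 i + (1 - p) * Y2 i = y i,
      forall i, i != ia -> i != ib -> Y1 i = y i /\ Y2 i = y i &
      Y1 ia * Y1 ib <= y ia * y ib /\ Y2 ia * Y2 ib <= y ia * y ib].
Proof.
move=> nab fa fb.
have [p [A [B [A' [B' [c [c' [-> p01 [meanA meanB] [[_ AB _] [_ AB' _]]]]]]]]]] :=
  combine_split nab fa fb.
exists p, (upd (upd y ia A) ib B), (upd (upd y ia A') ib B'), c, c'.
split => // [i|i nia nib|]; last by rewrite !upd2_at_ia // !upd2_at_ib.
  have [->|nib] := eqVneq i ib; first by rewrite !upd2_at_ib.
  have [->|nia] := eqVneq i ia; first by rewrite !upd2_at_ia.
  by rewrite !upd2_other // -mulrDl addrC subrK mul1r.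
by rewrite !upd2_other.
Qed.

Definition step_supermartingale F := forall y ia ib, in_unit_cube y -> ia != ib ->
  fracb (y ia) -> fracb (y ib) -> expect (combine y (Some ia) (Some ib)) F <= F y.

Lemma step_supermartingale_coord i : step_supermartingale (fun y => y i).
Proof.
move=> y ia ib _ nab fa fb; have [p [Y1 [Y2 [c1 [c2 [-> _ mean _ _]]]]]] := combine_moments nab fa fb.
by rewrite expect2 mean.
Qed.

Lemma step_supermartingale_oppcoord i : step_supermartingale (fun y => - y i).
Proof.
move=> y ia ib _ nab fa fb; have [p [Y1 [Y2 [c1 [c2 [-> _ mean _ _]]]]]] := combine_moments nab fa fb.
by rewrite expect2 !mulrN -opprD mean.
Qed.

Lemma step_supermartingale_cst (c : R) : step_supermartingale (fun=> c).
Proof.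
move=> y ia ib _ nab fa fb; have [p [Y1 [Y2 [c1 [c2 [-> _ _ _ _]]]]]] := combine_moments nab fa fb.
by rewrite expect2 -mulrDl addrC subrK mul1r.
Qed.

Lemma step_supermartingale_mul u v : u != v -> step_supermartingale (fun y => y u * y v).
Proof.
move=> nuv y ia ib _ nab fa fb.
have [p [Y1 [Y2 [c1 [c2 [-> p01 mean frozen [prod1 prod2]]]]]]] := combine_moments nab fa fb.
rewrite expect2.
(* a frozen factor splits off, and the other one is a martingale *)
have split_frozen u' v' : v' != ia -> v' != ib ->
    p * (Y1 u' * Y1 v') + (1 - p) * (Y2 u' * Y2 v') = y u' * y v'.
  move=> nia nib; have [-> ->] := frozen v' nia nib.
  by rewrite !mulrA -mulrDl mean.
have [vab|/norP[nva nvb]] := boolP ((v == ia) || (v == ib)); last first.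
  by rewrite split_frozen.
have [uab|/norP[nua nub]] := boolP ((u == ia) || (u == ib)); last first.
  by rewrite [y u * _]mulrC [Y1 u * _]mulrC [Y2 u * _]mulrC split_frozen.
move: nuv; case/orP: uab => /eqP ->; case/orP: vab => /eqP ->; rewrite ?eqxx // => _.
  exact: ler_convex.
by rewrite [Y1 ib * _]mulrC [Y2 ib * _]mulrC [y ib * _]mulrC; apply: ler_convex.
Qed.

Lemma expect_combine_le F y a b : step_supermartingale F -> in_unit_cube y ->
  (forall i, a = Some i -> fracb (y i) /\ b != Some i) ->
  (forall i, b = Some i -> fracb (y i)) ->
  expect (combine y a b) F <= F y.
Proof.
move=> superF vy; case: a b => [ia|] [ib|] ha hb; rewrite /= ?expect1 //.
have [fa nba] := ha ia erefl.
by apply: superF => //; [apply: contraNneq nba => -> | exact: hb].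
Qed.

Lemma expect_round_node l r y F :
  expect (round (Node l r) y) F =
  \sum_(o1 <- round l y) o1.1 *
    \sum_(o2 <- round r o1.2.1) o2.1 * expect (combine o2.2.1 o1.2.2 o2.2.2) F.
Proof.
rewrite /= expect_flatten; apply: eq_bigr => -[p [y1 a]] _ /=.
rewrite expect_flatten mulr_sumr; apply: eq_bigr => -[q [y2 b]] _ /=.
by rewrite expect_scale mulrA.
Qed.

Lemma expect_round_le t y F : step_supermartingale F -> uniq (leaves t) -> in_unit_cube y ->
  expect (round t y) F <= F y.
Proof.
move=> superF; elim: t y => [i|l IHl r IHr] y; first by rewrite /= expect1.
move=> U vy; move: (U); rewrite /= cat_uniq => /and3P[Ul _ Ur].
rewrite expect_round_node; apply: le_trans (IHl y Ul vy).
apply: (ler_sum_Forall (round_invariant Ul vy)) => -[p [y1 a]] inv1 /=.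
apply: ler_wpM2l; first exact: inv_weight inv1.
apply: le_trans (IHr y1 Ur (inv_in_cube inv1)).
apply: (ler_sum_Forall (round_invariant Ur (inv_in_cube inv1))) => -[q [y2 b]] inv2 /=.
apply: ler_wpM2l; first exact: inv_weight inv2.
have [ha hb] := children_pairable U inv1 inv2.
exact: expect_combine_le superF (inv_in_cube inv2) ha hb.
Qed.

Lemma expect_round_eq t y F : step_supermartingale F -> step_supermartingale (fun Y => - F Y) ->
  uniq (leaves t) -> in_unit_cube y -> expect (round t y) F = F y.
Proof.
move=> superF superNF U vy; apply/eqP; rewrite eq_le expect_round_le //=.
by rewrite -lerN2 -expectN expect_round_le.
Qed.

Lemma round_mass t y : uniq (leaves t) -> in_unit_cube y -> \sum_(o <- round t y) o.1 = 1.
Proof.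
move=> U vy; rewrite -[LHS]mul1r -expect_cst.
by rewrite expect_round_eq //; apply: step_supermartingale_cst.
Qed.

Lemma expect_round_coord t y i : uniq (leaves t) -> in_unit_cube y ->
  expect (round t y) (fun Y => Y i) = y i.
Proof.
apply: expect_round_eq; [exact: step_supermartingale_coord | exact: step_supermartingale_oppcoord].
Qed.

Lemma expect_round_mul t y u v : u != v -> uniq (leaves t) -> in_unit_cube y ->
  expect (round t y) (fun Y => Y u * Y v) <= y u * y v.
Proof. by move/step_supermartingale_mul; apply: expect_round_le. Qed.

End RoundingMoments.

Lemma invS_le_ratio (R : realFieldType) (a i : nat) :
  (i < a)%N -> (i.+1%:R)^-1 <= (a%:R - i%:R) / a%:R :> R.
Proof.
move=> ia; have A0 : (0 : R) < a%:R by rewrite ltr0n (leq_ltn_trans _ ia).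
rewrite ler_pdivlMr // mulrC ler_pdivrMr ?ltr0n // -natr1 -subr_ge0.
rewrite (_ : _ - _ = i%:R * (a%:R - (i%:R + 1))); last by ring.
by rewrite mulr_ge0 // subr_ge0 natr1 ler_nat.
Qed.

Section OrderedCost.
Variables (R : realType) (m k : nat).
Implicit Types (cv f g e : 'I_m -> R) (C : {set 'I_m}).

Definition ocost cv C : R :=
  \sum_(l < k) (l.+1%:R)^-1 * nth 0 (sort <=%R [seq cv i | i <- enum C]) l.

Lemma sort_map_comonotone cv f (s : seq 'I_m) :
  (forall i j, cv i <= cv j -> f i <= f j) ->
  sort <=%R [seq f i | i <- s] = [seq f i | i <- sort (relpre cv <=%R) s].
Proof.
move=> fmono; apply: le_sorted_eq; first exact: (sort_sorted le_total).
  rewrite sorted_map; apply: (sub_sorted _ (sort_sorted _ _)) => [i j /fmono //|i j].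
  exact: le_total.
by rewrite perm_sort perm_map // perm_sym perm_sort.
Qed.

Lemma nth_mapD f g (mu : R) (s : seq 'I_m) l :
  nth 0 [seq f i + mu * g i | i <- s] l =
  nth 0 [seq f i | i <- s] l + mu * nth 0 [seq g i | i <- s] l.
Proof. by elim: s l => [|i s IH] [|l] //=; rewrite mulr0 addr0. Qed.

Lemma ocost_comonotone cv f g (mu : R) C :
  (forall i, cv i = f i + mu * g i) ->
  (forall i j, cv i <= cv j -> f i <= f j) ->
  (forall i j, cv i <= cv j -> g i <= g j) ->
  ocost cv C = ocost f C + mu * ocost g C.
Proof.
move=> cvE fmono gmono.
rewrite /ocost (@sort_map_comonotone cv cv) // !(@sort_map_comonotone cv) //.
rewrite mulr_sumr -big_split; apply: eq_bigr => l _ /=.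
by rewrite (eq_map cvE) nth_mapD mulrDr mulrCA.
Qed.

Lemma ocost_eq0 cv C : (forall i, cv i = 0) -> ocost cv C = 0.
Proof.
move=> cv0; apply: big1 => l _.
have /all_pred1P -> : all (pred1 0) (sort <=%R [seq cv i | i <- enum C]).
  by rewrite all_sort all_map; apply/allP => i _; rewrite /= cv0.
by rewrite nth_nseq if_same mulr0.
Qed.

Lemma nth_sorted_integral (s : seq R) l : sorted <=%R s -> all (@integral R) s ->
  (l < size s)%N -> nth 0 s l = (count_mem 0 s <= l)%:R.
Proof.
elim: s l => [//|x s IH] l xs /= /andP[xint sint] ls.
case/orP: xint => /eqP x_val; subst x; rewrite ?eqxx ?add1n.
  by case: l ls => [|l] //= ls; rewrite ltnS IH // (path_sorted xs).
have /all_pred1P s1 : all (pred1 1) s.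
  move: xs => /=; rewrite (path_sortedE le_trans) => /andP[ge1 _].
  apply/allP => v vs; have /allP/(_ v vs) := ge1; have /allP/(_ v vs) := sint.
  by rewrite /= => /orP[] /eqP->; rewrite ?ler10 ?eqxx.
rewrite s1 count_nseq /= oner_eq0 mul0n.
by case: l ls => [|l] //= ls; rewrite nth_nseq -ltnS ls.
Qed.

Definition harmonic_tail (n : nat) : R := \sum_(n <= l < k) (l.+1%:R)^-1.

Lemma ocost_indicator e C : (forall i, integral (e i)) -> #|C| = k ->
  ocost e C = harmonic_tail (count (fun i => e i == 0) (enum C)).
Proof.
move=> eint cardC; rewrite /harmonic_tail big_geq_mkord big_mkcond /=.
apply: eq_bigr => l _; rewrite nth_sorted_integral ?(sort_sorted le_total) //; last first.
- by rewrite size_sort size_map -cardE cardC.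
- by rewrite all_sort all_map; apply/allP => i _ /=.
rewrite count_sort count_map.
by case: leqP; rewrite ?mulr1 ?mulr0.
Qed.

Lemma harmonic_tailS n :
  harmonic_tail n = harmonic_tail n.+1 + (if (n < k)%N then (n.+1%:R)^-1 else 0).
Proof.
rewrite /harmonic_tail; case: ltnP => nk; first by rewrite big_ltn // addrC.
by rewrite !big_geq ?addr0 // (leq_trans nk).
Qed.

Lemma harmonic_tail_ge0 n : 0 <= harmonic_tail n.
Proof. by apply: sumr_ge0 => l _; rewrite invr_ge0. Qed.

Lemma harmonic_tail_nonincr : {homo harmonic_tail : a b / (a <= b)%N >-> b <= a}.
Proof.
apply: homo_leq => [x|y x z|n]; [exact: lexx | move=> yx zy; exact: le_trans zy yx|].
by rewrite [leRHS]harmonic_tailS lerDl; case: ifP => // _; rewrite invr_ge0.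
Qed.

Lemma harmonic_tail_lb a : (a <= k)%N -> k%:R - a%:R <= k%:R * harmonic_tail a.
Proof.
move=> ak; rewrite -natrB // -sumr_const_nat /harmonic_tail mulr_sumr.
apply: ler_sum_nat => l /andP[_ lk].
by rewrite ler_pdivlMr ?ltr0n // mul1r ler_nat.
Qed.

(* A quadratic majorant of [harmonic_tail], touching it at [a]. *)
Definition quad_bound (a : nat) (z : R) : R :=
  harmonic_tail a + ((a%:R - z) + (a%:R - z) ^+ 2) / (2 * a%:R).

Lemma quad_boundS a n : (0 < a)%N ->
  quad_bound a n%:R = quad_bound a n.+1%:R + (a%:R - n%:R) / a%:R.
Proof. by move=> a0; rewrite /quad_bound -natr1; field; rewrite pnatr_eq0 -lt0n. Qed.

Lemma harmonic_tail_le_quad a n : (0 < a <= k)%N -> harmonic_tail n <= quad_bound a n%:R.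
Proof.
case/andP=> a0 ak; have A0 : (0 : R) < a%:R by rewrite ltr0n.
case: (leqP a n) => [an|na].
  apply: le_trans (harmonic_tail_nonincr an) _; rewrite lerDl.
  apply: divr_ge0; last by rewrite mulr_ge0 // ltW.
  move: an; rewrite leq_eqVlt => /orP[/eqP->|an]; first by rewrite subrr expr0n addr0.
  rewrite (_ : _ + _ = (n%:R - a%:R) * (n%:R - (a%:R + 1))); last by ring.
  by rewrite mulr_ge0 // subr_ge0 ?natr1 ler_nat // ltnW.
pose gap i := quad_bound a i%:R - harmonic_tail i.
suff : gap a <= gap n.
  by rewrite /gap /quad_bound subrr expr0n /= addr0 mul0r addr0 subrr subr_ge0.
have gap_mono : {in [pred i | (i <= a)%N] &, {homo gap : i j / (i <= j)%N >-> j <= i}}.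
  apply: homo_leq_in => [x|y x z yx zy|i j _ ja l /andP[_ lj]|i _ ia].
  - exact: lexx.
  - exact: le_trans zy yx.
  - exact: leq_trans (ltnW lj) ja.
  have step := invS_le_ratio R (ia : (i < a)%N).
  rewrite -subr_ge0 (_ : gap i - gap i.+1 = (a%:R - i%:R) / a%:R - (i.+1%:R)^-1).
    by rewrite subr_ge0.
  by rewrite /gap (quad_boundS i a0) (harmonic_tailS i) (leq_trans ia ak); ring.
by apply: gap_mono; rewrite ?inE // ltnW.
Qed.

Lemma quad_bound_variance_le a (z V : R) : (0 < a <= k)%N ->
  a%:R - 1 <= z <= a%:R -> V <= z -> V <= k%:R - z ->
  quad_bound a z + V / (2 * a%:R) <= 2 * (harmonic_tail a + (a%:R - z) / a%:R).
Proof.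
move=> /andP[a0 ak] /andP[z_lo z_hi] Vz VkZ.
have A0 : (0 : R) < a%:R by rewrite ltr0n.
have K0 : (0 : R) < k%:R by rewrite ltr0n (leq_trans a0 ak).
have AK : (a%:R : R) <= k%:R by rewrite ler_nat.
have g_lb := harmonic_tail_lb ak; have g0 := harmonic_tail_ge0 a.
set g := harmonic_tail a in g_lb g0 *; set A : R := a%:R in A0 AK z_lo z_hi g_lb *.
set K : R := k%:R in K0 AK VkZ g_lb.
(* If [k <= 2 a] use [V <= k - z] and [harmonic_tail_lb]; otherwise
   [harmonic_tail a > 1/2] and [V <= z] suffices. *)
have V_le : V <= 2 * A * g + 2 * (A - z).
  have [K2A|AK2] := leP K (2 * A).
    have : K * g <= 2 * A * g by rewrite ler_wpM2r.
    lra.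
  have g_half : 0 < 2 * g - 1.
    have : 0 < K * (2 * g - 1) by lra.
    by rewrite pmulr_rgt0.
  have : 0 <= A * (2 * g - 1) by rewrite mulr_ge0 // ltW.
  lra.
have sq : (A - z) ^+ 2 <= A - z by rewrite expr2 ler_piMl //; lra.
rewrite /quad_bound -/g -/A -subr_ge0.
have -> : 2 * (g + (A - z) / A) - (g + ((A - z) + (A - z) ^+ 2) / (2 * A) + V / (2 * A)) =
    (2 * A * g + 4 * (A - z) - (A - z) - (A - z) ^+ 2 - V) / (2 * A).
  by field; rewrite gt_eqF.
by apply: divr_ge0; [lra | rewrite mulr_ge0 // ltW].
Qed.

End OrderedCost.

Lemma min_sub_le (R : realDomainType) (u w W X : R) :
  0 <= u -> 0 <= w -> 0 <= W -> 0 <= X -> 1 <= W + X ->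
  Order.min u w - u * X <= w * W.
Proof.
move=> u0 w0 W0 X0 WX; have [uw|wu] := leP u w.
  rewrite -{1}[u]mulr1 -mulrBr; apply: le_trans (ler_wpM2r W0 uw).
  by rewrite ler_wpM2l //; lra.
apply: le_trans (_ : w - w * X <= _).
  by rewrite lerB // ler_wpM2r // ltW.
by rewrite -{1}[w]mulr1 -mulrBr ler_wpM2l //; lra.
Qed.

Section LPBound.
Variables (R : realType) (m k : nat).
Implicit Types (x : 'I_k -> 'I_m -> R) (cv f g e ys : 'I_m -> R).

Definition lp_value x cv : R := \sum_(l < k) \sum_(i < m) (l.+1%:R)^-1 * x l i * cv i.

Lemma lp_value_comb x cv f g (mu : R) : (forall i, cv i = f i + mu * g i) ->
  lp_value x cv = lp_value x f + mu * lp_value x g.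
Proof.
move=> cvE; rewrite /lp_value mulr_sumr -big_split; apply: eq_bigr => l _ /=.
by rewrite mulr_sumr -big_split; apply: eq_bigr => i _ /=; rewrite cvE; ring.
Qed.

Lemma lp_value_ge0 x cv : (forall l i, 0 <= x l i) -> (forall i, 0 <= cv i) ->
  0 <= lp_value x cv.
Proof.
by move=> x0 cv0; do 2 apply: sumr_ge0 => ? _; rewrite !mulr_ge0 // invr_ge0.
Qed.

Lemma sum_min_inv a : (0 < a <= k)%N ->
  \sum_(l < k) Order.min (a%:R^-1) (l.+1%:R^-1) = 1 + harmonic_tail R k a :> R.
Proof.
case/andP=> a0 ak; rewrite -(big_mkord xpredT (fun l => Order.min _ (l.+1%:R^-1))).
rewrite (@big_cat_nat _ _ _ a 0 k) //=; congr (_ + _).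
  rewrite (eq_big_nat _ _ (F2 := fun=> a%:R^-1)) => [|l /andP[_ la]].
    by rewrite sumr_const_nat subn0 -(mulr_natr (a%:R^-1)) mulVf // pnatr_eq0 -lt0n.
  by rewrite min_l // lef_pV2 ?posrE ?ltr0n // ler_nat.
apply: eq_big_nat => l /andP[al _].
by rewrite min_r // lef_pV2 ?posrE ?ltr0n // ler_nat ltnW.
Qed.

(* Weak LP duality, with dual multiplier [min (1/a) (1/(l+1))] for the covering
   constraint of row [l]: the mass of row [l] on the facilities with [e i = 0]
   is paid for by [ys]. *)
Lemma lp_value_indicator_lb x e ys a : (forall i, integral (e i)) ->
  (forall l i, 0 <= x l i) -> (forall i, \sum_l x l i <= ys i) ->
  (forall l, 1 <= \sum_i x l i) -> (0 < a <= k)%N ->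
  harmonic_tail R k a + (a%:R - \sum_i (1 - e i) * ys i) / a%:R <= lp_value x e.
Proof.
move=> eint x0 cap cover aP; have /andP[a0 _] := aP.
have e01 i : 0 <= e i <= 1 := integral_itv (eint i).
have ce0 i : 0 <= 1 - e i by rewrite subr_ge0; case/andP: (e01 i).
set u : R := a%:R^-1; have u0 : 0 <= u by rewrite invr_ge0.
have row (l : 'I_k) : Order.min u (l.+1%:R^-1) - u * \sum_i x l i * (1 - e i) <=
             \sum_i (l.+1%:R)^-1 * x l i * e i.
  rewrite [leRHS](eq_bigr (fun i => l.+1%:R^-1 * (x l i * e i))); last by move=> i _; rewrite mulrA.
  rewrite -mulr_sumr; apply: min_sub_le; rewrite ?invr_ge0 //.
  - by apply: sumr_ge0 => i _; rewrite mulr_ge0 //; case/andP: (e01 i).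
  - by apply: sumr_ge0 => i _; rewrite mulr_ge0.
  rewrite -big_split; apply: le_trans (cover l) _; apply: ler_sum => i _.
  by rewrite /= -mulrDr addrC subrK mulr1.
have cheap : \sum_l \sum_i x l i * (1 - e i) <= \sum_i (1 - e i) * ys i.
  rewrite exchange_big; apply: ler_sum => i _.
  by rewrite -mulr_suml mulrC ler_wpM2l.
apply: le_trans (ler_sum _ (fun l _ => row l)); rewrite sumrB sum_min_inv //.
rewrite -mulr_sumr mulrBl mulfV ?pnatr_eq0 -?lt0n // mulrC.
by move: (ler_wpM2l u0 cheap); lra.
Qed.

End LPBound.

Lemma nat_ceil_itv (R : archiRealFieldType) (z : R) n : (0 < n)%N -> 0 <= z <= n%:R ->
  exists a : nat, [/\ (0 < a <= n)%N, a%:R - 1 <= z & z <= a%:R].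
Proof.
move=> n0 /andP[z0 zn]; have /andP[tz zt] := truncn_itv z0.
have [tn|nt] := ltnP (Num.truncn z) n.
  by exists (Num.truncn z).+1; rewrite tn (ltW zt) -natr1 addrK tz.
exists n; rewrite n0 leqnn zn; split => //.
by apply: le_trans tz; rewrite lerBlDr natr1 ler_nat leqW.
Qed.

Section KSubsets.
Variables (R : realType) (m k : nat).
Implicit Types (Y e : 'I_m -> R).

Definition k_subset Y := (forall i, integral (Y i)) /\ \sum_i Y i = k%:R.

Lemma integral_indicator (v : R) : integral v -> (if v == 1 then 1 else 0) = v.
Proof. by case/orP=> /eqP->; rewrite ?eqxx // eq_sym oner_eq0. Qed.

Lemma card_chosen Y : k_subset Y -> #|chosen Y| = k.
Proof.
move=> [Yint Ysum]; apply/eqP; rewrite -(eqr_nat R) -Ysum -[#|chosen Y|]sum1_card.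
rewrite natr_sum big_mkcond /=; apply/eqP/eq_bigr => i _.
by rewrite inE integral_indicator.
Qed.

Lemma count_chosen Y e : k_subset Y -> (forall i, integral (e i)) ->
  (count (fun i => e i == 0) (enum (chosen Y)))%:R = \sum_i (1 - e i) * Y i.
Proof.
move=> [Yint _] eint; rewrite -sum1_count big_enum_cond natr_sum big_mkcond /=.
apply: eq_bigr => i _; rewrite inE.
case/orP: (eint i) => /eqP->; case/orP: (Yint i) => /eqP->;
  by rewrite ?eqxx ?(eq_sym 0) ?oner_eq0 /= ?subr0 ?subrr ?mulr1 ?mulr0 ?mul0r.
Qed.

End KSubsets.

(* Peel off the least positive value [mu] of [cv] on its whole support [e]. *)
Lemma layer_decomposition (R : realType) (m : nat) (cv : 'I_m -> R) :
  (forall i, 0 <= cv i) -> (exists i, 0 < cv i) ->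
  exists (mu : R) (f e : 'I_m -> R),
  [/\ 0 < mu, forall i, integral (e i), forall i, 0 <= f i,
      (#|[set i | (0 < f i)%R]| < #|[set i | (0 < cv i)%R]|)%N &
      [/\ forall i, cv i = f i + mu * e i,
          forall i j, cv i <= cv j -> f i <= f j &
          forall i j, cv i <= cv j -> e i <= e j]].
Proof.
move=> cv0 [i1 pos1].
have [i0 /= pos0 min0] := arg_minP (P := [pred i | 0 < cv i]) cv pos1.
pose e i : R := if 0 < cv i then 1 else 0.
exists (cv i0), (fun i => cv i - cv i0 * e i), e; rewrite /e.
split => // [i|i||].
- by case: ifP; rewrite /integral eqxx ?orbT.
- by case: ifP => posi; rewrite ?mulr1 ?mulr0 ?subr0 ?subr_ge0 // min0.
- apply: proper_card; apply/properP; split.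
    apply/subsetP => i; rewrite !inE.
    by case: (ltP 0 (cv i)) => // ci; rewrite mulr0 subr0 ltNge ci.
  by exists i0; rewrite !inE pos0 // mulr1 subrr ltxx.
split=> [i|i j cvij|i j cvij]; first by rewrite subrK.
  have [posi|] := boolP (0 < cv i).
    by rewrite (lt_le_trans posi cvij) !mulr1 lerD2r.
  rewrite -leNgt => cvi0; have -> : cv i = 0 by apply/eqP; rewrite eq_le cvi0 cv0.
  by rewrite /= mulr0 subr0; case: ifP => posj; rewrite ?mulr1 ?mulr0 ?subr_ge0 ?subr0 ?cv0 ?min0.
have [posi|_] := boolP (0 < cv i); last by case: ifP; rewrite ?ler01.
by rewrite (lt_le_trans posi cvij).
Qed.

Section NegativelyCorrelated.
Variables (R : realType) (m k : nat) (d : dist R m).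
Implicit Types (F G : ('I_m -> R) -> R) (cv e z : 'I_m -> R).

Hypothesis d_support : List.Forall (fun o => 0 <= o.1 /\ k_subset k o.2.1) d.
Hypothesis d_mass : \sum_(o <- d) o.1 = 1.

Local Notation marg i := (expect d (fun Y => Y i)).

Hypothesis d_negcorr : forall u v, u != v ->
  expect d (fun Y => Y u * Y v) <= marg u * marg v.

Lemma expect_const (c : R) : expect d (fun=> c) = c.
Proof. by rewrite expect_cst d_mass mulr1. Qed.

Lemma ler_expect_k F G : (forall Y, k_subset k Y -> F Y <= G Y) ->
  expect d F <= expect d G.
Proof. exact: ler_expect d_support. Qed.

Lemma eq_expect_k F G : (forall Y, k_subset k Y -> F Y = G Y) ->
  expect d F = expect d G.
Proof. by apply: eq_expect; apply: List.Forall_impl d_support => o []. Qed.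

Lemma expect_lin z : expect d (fun Y => \sum_i z i * Y i) = \sum_i z i * marg i.
Proof. by rewrite expect_sum; apply: eq_bigr => i _; rewrite expectZ. Qed.

Lemma marg_ge0 i : 0 <= marg i.
Proof.
rewrite -(expect_const 0); apply: ler_expect_k => Y [Yint _].
by case/andP: (integral_itv (Yint i)).
Qed.

Definition variance F := expect d (fun Y => F Y ^+ 2) - expect d F ^+ 2.

Lemma eq_variance_k F G : (forall Y, k_subset k Y -> F Y = G Y) ->
  variance F = variance G.
Proof.
move=> FG; rewrite /variance (eq_expect_k FG).
by rewrite (eq_expect_k (G := fun Y => G Y ^+ 2)) // => Y /FG ->.
Qed.

Lemma variance_sub (c : R) F : variance (fun Y => c - F Y) = variance F.
Proof.
rewrite /variance (_ : expect d _ = expect d (fun Y => c ^+ 2 + (- (2 * c) * F Y + F Y ^+ 2))).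
  by rewrite !expectD !expectZ !expect_const expectN; ring.
by apply: eq_expectr => Y; ring.
Qed.

Lemma variance_lin_le z : (forall i, 0 <= z i <= 1) ->
  variance (fun Y => \sum_i z i * Y i) <= \sum_i z i * marg i.
Proof.
move=> z01.
have sqr Y : (\sum_i z i * Y i) ^+ 2 = \sum_i \sum_j z i * z j * (Y i * Y j).
  rewrite expr2 mulr_suml; apply: eq_bigr => i _.
  by rewrite mulr_sumr; apply: eq_bigr => j _; ring.
rewrite /variance expect_lin sqr.
rewrite (eq_expectr _ sqr) expect_sum.
under eq_bigr do rewrite expect_sum; under eq_bigr do under eq_bigr do rewrite expectZ.
have diag i : \sum_j (if j == i then z i * marg i else 0) = z i * marg i.
  by rewrite -big_mkcond big_pred1_eq.
rewrite lerBlDl -[X in _ + X](eq_bigr _ (fun i _ => diag i)) -big_split.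
apply: ler_sum => i _; rewrite -big_split; apply: ler_sum => j _ /=.
have zz0 : 0 <= z i * z j by rewrite mulr_ge0 //; [case/andP: (z01 i) | case/andP: (z01 j)].
have [->|nji] := eqVneq j i; last by rewrite addr0 ler_wpM2l // d_negcorr // eq_sym.
rewrite (eq_expect_k (G := fun Y => Y i)); last first.
  by move=> Y [Yint _]; case/orP: (Yint i) => /eqP->; rewrite ?mulr0 ?mulr1.
have [z0 z1] := andP (z01 i); have m0 := marg_ge0 i.
apply: le_trans (_ : z i * marg i <= _); last by rewrite lerDr mulr_ge0 // mulr_ge0.
by rewrite -mulrA ler_piMl // mulr_ge0.
Qed.

Lemma expect_quad_bound a F : (0 < a)%N ->
  expect d (fun Y => quad_bound k a (F Y)) =
  quad_bound k a (expect d F) + variance F / (2 * a%:R).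
Proof.
move=> a0; have a0' : (a%:R : R) != 0 by rewrite pnatr_eq0 -lt0n.
have quadE (t : R) : quad_bound k a t = quad_bound k a 0 +
    (- (1 + 2 * a%:R) / (2 * a%:R) * t + (2 * a%:R)^-1 * t ^+ 2).
  by rewrite /quad_bound; field.
rewrite (eq_expectr _ (fun Y => quadE (F Y))) expectD expect_const expectD !expectZ.
by rewrite [in RHS]quadE /variance; field.
Qed.

Variable x : 'I_k -> 'I_m -> R.
Hypothesis x_ge0 : forall l i, 0 <= x l i.
Hypothesis x_cap : forall i, \sum_l x l i <= marg i.
Hypothesis x_cover : forall l, 1 <= \sum_i x l i.

Lemma expect_ocost_indicator e : (forall i, integral (e i)) ->
  expect d (fun Y => ocost k e (chosen Y)) <= 2 * lp_value x e.
Proof.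
move=> eint; have e01 i := integral_itv (eint i).
have [k0|kpos] := posnP k.
  rewrite (eq_expect_k (G := fun=> 0)) ?expect_const.
    by rewrite mulr_ge0 // lp_value_ge0 // => i; case/andP: (e01 i).
  by move=> Y _; apply: big1 => l; have := leq_trans (ltn_ord l) (eq_leq k0); rewrite ltn0.
pose cheap Y := \sum_i (1 - e i) * Y i; pose dear Y := \sum_i e i * Y i.
have ce01 i : 0 <= 1 - e i <= 1 by case/andP: (e01 i) => e0 e1; apply/andP; split; lra.
have cheap_dear Y : k_subset k Y -> cheap Y = k%:R - dear Y.
  move=> [_ <-]; rewrite -sumrB; apply: eq_bigr => i _; ring.
have mean_cheap : expect d cheap = k%:R - expect d dear.
  by rewrite (eq_expect_k cheap_dear) expectD expect_const expectN.
have cheap_itv : 0 <= expect d cheap <= k%:R.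
  have dear0 : 0 <= expect d dear.
    by rewrite expect_lin sumr_ge0 // => i _; rewrite mulr_ge0 ?marg_ge0 //; case/andP: (e01 i).
  have cheap0 : 0 <= expect d cheap.
    by rewrite expect_lin sumr_ge0 // => i _; rewrite mulr_ge0 ?marg_ge0 //; case/andP: (ce01 i).
  by rewrite cheap0 mean_cheap gerBl.
(* Compare [ocost e] with the quadratic majorant at [a], the mean of [cheap]
   rounded up; the mean of the majorant is controlled by the variance of
   [cheap = k - dear], which negative correlation bounds twice. *)
have [a [aP a_lo a_hi]] := nat_ceil_itv kpos cheap_itv; have /andP[a0 _] := aP.
apply: le_trans (_ : expect d (fun Y => quad_bound k a (cheap Y)) <= _).
  apply: ler_expect_k => Y Yk; rewrite (ocost_indicator eint (card_chosen Yk)).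
  by rewrite /cheap -(count_chosen Yk eint); apply: harmonic_tail_le_quad.
rewrite expect_quad_bound //.
have cheapE : expect d cheap = \sum_i (1 - e i) * marg i := expect_lin _.
apply: le_trans (ler_wpM2l (ler0n R 2) (lp_value_indicator_lb eint x_ge0 x_cap x_cover aP)).
rewrite -cheapE; apply: quad_bound_variance_le => //; first by rewrite a_lo.
  by rewrite cheapE; apply: variance_lin_le.
rewrite (eq_variance_k cheap_dear) variance_sub mean_cheap opprB addrC subrK.
by rewrite (expect_lin e); apply: variance_lin_le.
Qed.

Lemma expect_ocost_le cv : (forall i, 0 <= cv i) ->
  expect d (fun Y => ocost k cv (chosen Y)) <= 2 * lp_value x cv.
Proof.
have [n] := ubnP #|[set i | 0 < cv i]|; elim: n cv => // n IH cv supp cv0.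
have [pos|nopos] := boolP [exists i, 0 < cv i]; last first.
  have cv_eq0 i : cv i = 0.
    by apply/eqP; rewrite eq_le cv0 andbT leNgt; apply: contraNN nopos => ?; apply/existsP; exists i.
  rewrite (eq_expect_k (G := fun=> 0)) => [|Y _]; last exact: ocost_eq0.
  by rewrite expect_const mulr_ge0 ?lp_value_ge0.
have [mu [f [e [mu0 eint f0 suppf [cvE fmono emono]]]]] := layer_decomposition cv0 (existsP pos).
rewrite (lp_value_comb x cvE) mulrDr mulrCA.
rewrite (eq_expect_k (G := fun Y => ocost k f (chosen Y) + mu * ocost k e (chosen Y))).
  rewrite expectD expectZ lerD //; first by apply: IH => //; apply: leq_trans suppf _.
  by rewrite ler_wpM2l ?(ltW mu0) ?expect_ocost_indicator.
by move=> Y _; apply: ocost_comonotone.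
Qed.

End NegativelyCorrelated.

Lemma sum_integral_nat (R : realType) (I : finType) (P : pred I) (Y : I -> R) :
  (forall i, P i -> integral (Y i)) -> exists n : nat, \sum_(i | P i) Y i = n%:R.
Proof.
move=> Yint; apply: (big_ind (fun v => exists n : nat, v = n%:R)) => [|_ _ [p ->] [q ->]|i /Yint].
- by exists 0%N.
- by exists (p + q)%N; rewrite natrD.
by case/orP=> /eqP->; [exists 0%N | exists 1%N].
Qed.

Lemma natrB_notfrac (R : realType) (k n : nat) : ~~ fracb (k%:R - n%:R : R).
Proof.
rewrite /fracb negb_and -!leNgt; have [nk|kn] := ltnP n k.
  by rewrite -natrB ?(ltnW nk) // ler1n subn_gt0 nk orbT.
by rewrite subr_le0 ler_nat kn.
Qed.

Lemma round_k_subset (R : realType) (m k : nat) (t : ttree m) (y : 'I_m -> R) :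
  tree_ok t -> in_unit_cube y -> \sum_i y i = k%:R ->
  List.Forall (fun o => 0 <= o.1 /\ k_subset k o.2.1) (round t y).
Proof.
move=> tok vy ysum; have U : uniq (leaves t) by rewrite (perm_uniq tok) enum_uniq.
have inS i : i \in leaves t by rewrite (perm_mem tok) mem_enum.
apply: List.Forall_impl (round_invariant U vy) => -[w [Y c]] [/= w0 _ _ Ysum ct Yint].
rewrite ysum in Ysum; split=> //; split=> // i.
case: c ct Yint => [i0|] ct Yint; last exact: Yint.
have /andP[_ frac0] := ct i0 erefl.
have [n sumn] : exists n : nat, \sum_(j | j != i0) Y j = n%:R.
  by apply: sum_integral_nat => j nj; apply: Yint; rewrite // eq_sym; apply: contraNneq nj => [[->]].
have Y0E : Y i0 = k%:R - n%:R by rewrite -Ysum (bigD1 i0) //= sumn addrK.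
by rewrite Y0E (negbTE (natrB_notfrac R k n)) in frac0.
Qed.

Theorem lemma2 (R : realType) (n m k : nat) (c : 'I_m -> 'I_n -> R)
  (xs : 'I_k -> 'I_m -> 'I_n -> R) (ys : 'I_m -> R) (t : ttree m) :
  (k <= m)%N ->
  (forall i j, 0 <= c i j) ->
  lp_optimal c xs ys ->
  tree_ok t ->
  forall j : 'I_n,
    rounding_expect t ys (fun Y => ordered_cost k c (chosen Y) j)
      <= (23589%:R / 10000%:R) * lp_obj_j c xs j.
Proof.
move=> _ c0 [[ys_sum x_cap x_cover ys01 x01] _] tok j.
have U : uniq (leaves t) by rewrite (perm_uniq tok) enum_uniq.
have marg i : expect (round t ys) (fun Y => Y i) = ys i := expect_round_coord i U ys01.
have x0 l i : 0 <= xs l i j by case/andP: (x01 l i j).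
have lp0 : 0 <= lp_obj_j c xs j by apply: lp_value_ge0.
have two_le : (2 : R) <= 23589%:R / 10000%:R.
  have pos : (0 : R) < 10000%:R by rewrite ltr0n.
  by rewrite (ler_pdivlMr _ _ pos) -natrM ler_nat.
apply: le_trans (ler_wpM2r lp0 two_le).
apply: (expect_ocost_le (round_k_subset tok ys01 ys_sum) (round_mass U ys01)) => //.
- by move=> u v nuv; rewrite !marg; apply: expect_round_mul.
- by move=> i; rewrite marg.
Qed.
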